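(* Let $X$ be a compact metric space with metric $d$. If a continuous map $f\colon X\to X$ satisfies $X=R(f)$ and has the contractive shadowing property, then $X$ is a finite set.
   Context: For $x\in X$, the $\omega$-limit set $\omega(x,f)$ is the set of $y\in X$ such that $f^{i_j}(x)\to y$ for some sequence $0\le i_1<i_2<\cdots$. $R(f)=\{x\in X: x\in\omega(x,f)\}$. For $\delta>0$, a sequence $(x_i)_{i\ge0}$ is a $\delta$-pseudo orbit of $f$ if $d(f(x_i),x_{i+1})\le\delta$ for all $i\ge0$; it is $\epsilon$-shadowed by $x$ if $d(f^i(x),x_i)\le\epsilon$ for all $i\ge0$. $f$ has the contractive shadowing property if there are $0<L<1$ and $\delta_0>0$ such that for every $0<\delta\le\delta_0$, every $\delta$-pseudo orbit of $f$ is $L\delta$-shadowed by some point of $X$. *)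

From Stdlib Require Import Reals List.
Open Scope R_scope.

Definition is_metric {X : Type} (d : X -> X -> R) : Prop :=
  (forall x y, 0 <= d x y) /\
  (forall x y, d x y = 0 <-> x = y) /\
  (forall x y, d x y = d y x) /\
  (forall x y z, d x z <= d x y + d y z).

Definition metric_open {X : Type} (d : X -> X -> R) (U : X -> Prop) : Prop :=
  forall x, U x -> exists r, 0 < r /\ forall y, d x y < r -> U y.

Definition metric_compact {X : Type} (d : X -> X -> R) : Prop :=
  forall (I : Type) (U : I -> X -> Prop),
    (forall i, metric_open d (U i)) ->
    (forall x, exists i, U i x) ->
    exists l : list I, forall x, exists i, In i l /\ U i x.

Definition metric_continuous {X : Type} (d : X -> X -> R) (f : X -> X) : Prop :=
  forall x eps, 0 < eps -> exists delta, 0 < delta /\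
    forall y, d x y < delta -> d (f x) (f y) < eps.

Fixpoint iter {X : Type} (i : nat) (f : X -> X) (x : X) : X :=
  match i with O => x | S n => f (iter n f x) end.

Definition omega_limit {X : Type} (d : X -> X -> R) (f : X -> X) (x y : X) : Prop :=
  exists s : nat -> nat, (forall j, (s j < s (S j))%nat) /\
    forall eps, 0 < eps -> exists N, forall j, (N <= j)%nat ->
      d (iter (s j) f x) y < eps.

Definition recurrent {X : Type} (d : X -> X -> R) (f : X -> X) (x : X) : Prop :=
  omega_limit d f x x.

Definition pseudo_orbit {X : Type} (d : X -> X -> R) (f : X -> X)
  (delta : R) (xs : nat -> X) : Prop :=
  forall i, d (f (xs i)) (xs (S i)) <= delta.

Definition shadowed {X : Type} (d : X -> X -> R) (f : X -> X)
  (eps : R) (xs : nat -> X) (x : X) : Prop :=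
  forall i, d (iter i f x) (xs i) <= eps.

Definition contractive_shadowing {X : Type} (d : X -> X -> R) (f : X -> X) : Prop :=
  exists L delta0, 0 < L /\ L < 1 /\ 0 < delta0 /\
    forall delta, 0 < delta -> delta <= delta0 ->
      forall xs, pseudo_orbit d f delta xs ->
        exists x, shadowed d f (L * delta) xs x.

Definition finite_type (X : Type) : Prop :=
  exists l : list X, forall x, In x l.

From Stdlib Require Import Reals List Lra Lia Psatz Arith.
Open Scope R_scope.

(* Let rho = delta0 / 2 and q = L (3 - L) / 2 < 1.  If d(p, z) < rho, then p lies
   in the orbit closure of z: gluing a return of p to itself, an orbit segment
   from near p to near z, and the orbit of z gives a pseudo-orbit whose shadow
   starts q times closer to p and then follows the orbit of z; iterating, the
   error shrinks geometrically.  If 0 < d(f^n p, p) <= rho, shadow the periodic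
   pseudo-orbit p, ..., f^(n-1) p, p, ... by some z; z is near p, so the orbit of
   z returns close to p at some time s, and s mod n is a return time j < n of p
   with d(f^j p, p) < d(f^n p, p) (for j = 0 continuity of f^n gives a
   contradiction).  By induction on n every point is periodic, so every
   rho-ball is contained in a finite periodic orbit, and compactness makes X
   finite. *)

Lemma iter_add {X : Type} (f : X -> X) a b x :
  iter (a + b) f x = iter a f (iter b f x).
Proof. induction a as [|a IH]; simpl; [reflexivity | now rewrite IH]. Qed.

Lemma iter_mod {X : Type} (f : X -> X) N x :
  (N <> 0)%nat -> iter N f x = x -> forall k, iter k f x = iter (k mod N) f x.
Proof.
  intros HN Hper k.
  assert (Hmul : forall c, iter (N * c) f x = x).
  { induction c as [|c IH]; [now rewrite Nat.mul_0_r|].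
    replace (N * S c)%nat with (N + N * c)%nat by lia.
    now rewrite iter_add, IH. }
  rewrite (Nat.div_mod k N) at 1 by exact HN.
  now rewrite Nat.add_comm, iter_add, Hmul.
Qed.

Lemma In_periodic_orbit {X : Type} (f : X -> X) N x k :
  (1 <= N)%nat -> iter N f x = x ->
  In (iter k f x) (map (fun i => iter i f x) (seq 0 N)).
Proof.
  intros HN Hper.
  rewrite (iter_mod f N x) by (lia || exact Hper).
  apply (in_map (fun i => iter i f x)), in_seq.
  split; [lia|]. apply Nat.mod_upper_bound; lia.
Qed.

Section Dynamics.

Variables (X : Type) (d : X -> X -> R) (f : X -> X).
Hypothesis Hd : is_metric d.

Lemma dist_ge0 x y : 0 <= d x y.
Proof. apply Hd. Qed.

Lemma dist_eq0 x y : d x y = 0 <-> x = y.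
Proof. apply Hd. Qed.

Lemma dist_refl x : d x x = 0.
Proof. now apply dist_eq0. Qed.

Lemma dist_sym x y : d x y = d y x.
Proof. apply Hd. Qed.

Lemma dist_triangle x y z : d x z <= d x y + d y z.
Proof. apply Hd. Qed.

Lemma ball_open x r : metric_open d (fun y => d x y < r).
Proof.
  intros y Hy. exists (r - d x y). split; [lra|].
  intros w Hw. pose proof (dist_triangle x y w). lra.
Qed.

Lemma In_of_approx (l : list X) y :
  (forall eta, 0 < eta -> exists u, In u l /\ d u y < eta) -> In y l.
Proof.
  induction l as [|a l IH]; intros Happrox.
  - destruct (Happrox 1 ltac:(lra)) as [u [[] _]].
  - destruct (Req_dec (d a y) 0) as [Hay|Hay]; [left; now apply dist_eq0|].
    right. apply IH. intros eta Heta.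
    assert (Hpos : 0 < Rmin eta (d a y)) by (pose proof (dist_ge0 a y); apply Rmin_pos; lra).
    destruct (Happrox _ Hpos) as [u [[<-|Hu] Hu_y]].
    + pose proof (Rmin_r eta (d a y)). lra.
    + exists u. split; [exact Hu|]. pose proof (Rmin_l eta (d a y)). lra.
Qed.

Lemma finite_of_compact_locally_finite r :
  metric_compact d -> 0 < r ->
  (forall x, exists l : list X, forall y, d x y < r -> In y l) -> finite_type X.
Proof.
  intros Hcomp Hr Hloc.
  destruct (Hcomp X (fun x y => d x y < r)) as [centers Hcover].
  - exact (fun x => ball_open x r).
  - intro x. exists x. rewrite dist_refl. exact Hr.
  - assert (Hunion : forall cs : list X, exists l, forall x, In x cs ->
                       forall y, d x y < r -> In y l).
    { induction cs as [|c cs [l Hl]]; [exists nil; intros x []|].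
      destruct (Hloc c) as [lc Hlc]. exists (lc ++ l).
      intros x [<-|Hx] y Hy; apply in_or_app; [left|right]; eauto. }
    destruct (Hunion centers) as [l Hl]. exists l. intro y.
    destruct (Hcover y) as [x [Hx Hxy]]. eauto.
Qed.

Lemma iter_continuous n x eps :
  metric_continuous d f -> 0 < eps -> exists delta, 0 < delta /\
    forall y, d x y < delta -> d (iter n f x) (iter n f y) < eps.
Proof.
  intros Hcont. revert x eps. induction n as [|n IH]; intros x eps Heps.
  - now exists eps.
  - destruct (Hcont (iter n f x) eps Heps) as [d1 [Hd1 H1]].
    destruct (IH x d1 Hd1) as [d2 [Hd2 H2]].
    exists d2. split; [exact Hd2|]. intros y Hy. apply H1, H2, Hy.
Qed.

Lemma recurrent_return x eps B :
  recurrent d f x -> 0 < eps ->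
  exists m, (B <= m)%nat /\ (1 <= m)%nat /\ d (iter m f x) x < eps.
Proof.
  intros [s [Hs Hconv]] Heps.
  destruct (Hconv eps Heps) as [N HN].
  assert (Hgrow : forall j, (j <= s j)%nat) by (induction j; [lia | specialize (Hs j); lia]).
  exists (s (N + B + 1)%nat). pose proof (Hgrow (N + B + 1)%nat).
  repeat split; [lia | lia | apply HN; lia].
Qed.

Definition in_orbit_closure (z p : X) : Prop :=
  forall eta, 0 < eta -> exists s, d (iter s f z) p < eta.

Definition prepend_orbit (m : nat) (a : X) (xs : nat -> X) (t : nat) : X :=
  if Nat.ltb t m then iter t f a else xs (t - m)%nat.

Lemma prepend_orbit_lt m a xs t : (t < m)%nat -> prepend_orbit m a xs t = iter t f a.
Proof. intros Ht. unfold prepend_orbit. destruct (Nat.ltb_spec t m); [reflexivity | lia]. Qed.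

Lemma prepend_orbit_add m a xs i : prepend_orbit m a xs (m + i) = xs i.
Proof.
  unfold prepend_orbit. destruct (Nat.ltb_spec (m + i) m); [lia|].
  f_equal. lia.
Qed.

Lemma pseudo_orbit_orbit delta z :
  0 <= delta -> pseudo_orbit d f delta (fun t => iter t f z).
Proof. intros Hdelta i. simpl. rewrite dist_refl; assumption. Qed.

Lemma pseudo_orbit_prepend delta m a xs :
  0 <= delta -> pseudo_orbit d f delta xs -> d (iter m f a) (xs 0%nat) <= delta ->
  pseudo_orbit d f delta (prepend_orbit m a xs).
Proof.
  intros Hdelta Hxs Hjump i. unfold prepend_orbit.
  destruct (Nat.ltb_spec i m), (Nat.ltb_spec (S i) m); try lia.
  - simpl. rewrite dist_refl; assumption.
  - replace (S i - m)%nat with 0%nat by lia.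
    replace m with (S i) in Hjump by lia. exact Hjump.
  - replace (S i - m)%nat with (S (i - m)) by lia. apply Hxs.
Qed.

Lemma pseudo_orbit_periodic n p :
  (1 <= n)%nat -> pseudo_orbit d f (d (iter n f p) p) (fun t => iter (t mod n) f p).
Proof.
  intros Hn i.
  assert (Hi : (i mod n < n)%nat) by (apply Nat.mod_upper_bound; lia).
  replace (S i mod n)%nat with ((i mod n + 1) mod n)%nat
    by (rewrite Nat.Div0.add_mod_idemp_l; f_equal; lia).
  destruct (Nat.eq_dec (i mod n + 1) n) as [Hwrap|Hwrap].
  - rewrite Hwrap, Nat.Div0.mod_same. simpl.
    set (a := (i mod n)%nat) in *. replace n with (S a) by lia. apply Rle_refl.
  - rewrite (Nat.mod_small (i mod n + 1) n) by lia.
    rewrite Nat.add_1_r. simpl. rewrite dist_refl. apply dist_ge0.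
Qed.

Section ContractiveShadowing.

Hypothesis Hrec : forall x, recurrent d f x.
Variables L delta0 : R.
Hypotheses (HL0 : 0 < L) (HL1 : L < 1) (Hdelta0 : 0 < delta0).
Hypothesis Hshadow : forall delta, 0 < delta -> delta <= delta0 ->
  forall xs, pseudo_orbit d f delta xs -> exists x, shadowed d f (L * delta) xs x.

Let rho := delta0 / 2.
Let q := L * (3 - L) / 2.

Lemma q_bounds : 0 < q < 1.
Proof. unfold q. split; nra. Qed.

Lemma shadow_closer p z sigma Q T :
  (1 <= T)%nat -> 0 < sigma < rho -> d Q p <= sigma -> d (iter T f Q) z <= sigma ->
  exists Q' T', (1 <= T')%nat /\ d Q' p <= q * sigma /\
    forall i, d (iter (T' + i) f Q') (iter i f z) <= q * sigma.
Proof.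
  intros HT Hsigma HQp HQz. unfold rho in Hsigma.
  (* The return error tau is chosen so that L * (sigma + tau) = q * sigma. *)
  pose (tau := (1 - L) * sigma / 2).
  assert (Htau : 0 < tau < sigma) by (unfold tau; split; nra).
  destruct (recurrent_return p tau 0 (Hrec p) ltac:(lra)) as [m [_ [Hm Hmp]]].
  pose (xs := prepend_orbit m p (prepend_orbit T Q (fun t => iter t f z))).
  assert (Hxs : pseudo_orbit d f (sigma + tau) xs).
  { apply pseudo_orbit_prepend; [lra| apply pseudo_orbit_prepend |].
    - lra.
    - apply pseudo_orbit_orbit; lra.
    - simpl. lra.
    - rewrite prepend_orbit_lt by lia. simpl.
      pose proof (dist_triangle (iter m f p) p Q). rewrite (dist_sym p Q) in *. lra. }
  destruct (Hshadow (sigma + tau) ltac:(lra) ltac:(lra) xs Hxs) as [x0 Hx0].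
  replace (L * (sigma + tau)) with (q * sigma) in Hx0 by (unfold q, tau; field).
  exists x0, (m + T)%nat. repeat split; [lia| |].
  - specialize (Hx0 0%nat). unfold xs in Hx0. rewrite prepend_orbit_lt in Hx0 by lia. exact Hx0.
  - intro i. specialize (Hx0 (m + (T + i))%nat).
    unfold xs in Hx0. rewrite !prepend_orbit_add in Hx0.
    now rewrite <- Nat.add_assoc.
Qed.

Lemma shadow_closer_iter p z sigma :
  0 < sigma < rho -> d z p <= sigma -> forall k,
  exists Q T, (1 <= T)%nat /\ d Q p <= q ^ S k * sigma /\
    forall i, d (iter (T + i) f Q) (iter i f z) <= q ^ S k * sigma.
Proof.
  intros Hsigma Hzp. pose proof q_bounds as Hq.
  assert (Hpow : forall k, 0 < q ^ k <= 1) by (induction k; simpl; nra).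
  induction k as [|k [Q [T [HT [HQp HQz]]]]].
  - destruct (recurrent_return z sigma 0 (Hrec z) ltac:(lra)) as [T [_ [HT HTz]]].
    rewrite pow_1.
    exact (shadow_closer p z sigma z T HT Hsigma Hzp ltac:(lra)).
  - specialize (HQz 0%nat). rewrite Nat.add_0_r in HQz.
    assert (Hrange : 0 < q ^ S k * sigma < rho) by (destruct (Hpow (S k)); split; nra).
    destruct (shadow_closer p z _ Q T HT Hrange HQp HQz) as [Q' [T' [HT' Hclose]]].
    exists Q', T'. change (q ^ S (S k)) with (q * q ^ S k). rewrite Rmult_assoc.
    split; [exact HT' | exact Hclose].
Qed.

Lemma in_orbit_closure_of_close p z : d z p < rho -> in_orbit_closure z p.
Proof.
  intros Hzp eta Heta.
  pose (sigma := (d z p + rho) / 2).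
  assert (Hsigma : 0 < sigma < rho)
    by (pose proof (dist_ge0 z p); unfold sigma, rho in *; split; lra).
  pose proof q_bounds as Hq.
  destruct (pow_lt_1_zero q ltac:(rewrite Rabs_pos_eq; lra) (eta / (4 * sigma)))
    as [k Hk]; [apply Rdiv_lt_0_compat; lra|].
  specialize (Hk k (le_n k)). rewrite Rabs_pos_eq in Hk by (apply pow_le; lra).
  assert (Hsmall : q ^ S k * sigma < eta / 4).
  { simpl. apply (Rmult_lt_compat_r sigma) in Hk; [|lra].
    replace (eta / (4 * sigma) * sigma) with (eta / 4) in Hk by (field; lra).
    pose proof (pow_le q k ltac:(lra)). nra. }
  destruct (shadow_closer_iter p z sigma Hsigma ltac:(unfold sigma; lra) k)
    as [Q [T [_ [HQp HQz]]]].
  destruct (recurrent_return Q (eta / 4) T (Hrec Q) ltac:(lra)) as [M [HTM [_ HMQ]]].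
  exists (M - T)%nat.
  specialize (HQz (M - T)%nat). replace (T + (M - T))%nat with M in HQz by lia.
  pose proof (dist_triangle (iter (M - T) f z) (iter M f Q) p) as Htri1.
  pose proof (dist_triangle (iter M f Q) Q p).
  rewrite (dist_sym _ (iter M f Q)) in Htri1. lra.
Qed.

Lemma return_closer n p :
  metric_continuous d f -> (1 <= n)%nat -> 0 < d (iter n f p) p <= rho ->
  exists j, (1 <= j)%nat /\ (j < n)%nat /\ d (iter j f p) p < d (iter n f p) p.
Proof.
  intros Hcont Hn Hr. set (r := d (iter n f p) p) in *. unfold rho in Hr.
  destruct (Hshadow r ltac:(lra) ltac:(lra) _ (pseudo_orbit_periodic n p Hn))
    as [z Hz].
  assert (Hzp : d z p < rho).
  { specialize (Hz 0%nat). cbv beta in Hz. rewrite Nat.Div0.mod_0_l in Hz.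
    unfold rho. simpl in Hz. nra. }
  assert (Hgap : 0 < (1 - L) * r / 2) by nra.
  destruct (iter_continuous n p _ Hcont Hgap) as [eta [Heta Hcont_n]].
  destruct (in_orbit_closure_of_close p z Hzp (Rmin eta ((1 - L) * r / 2)))
    as [s Hs]; [now apply Rmin_pos|].
  pose proof (Rmin_l eta ((1 - L) * r / 2)).
  pose proof (Rmin_r eta ((1 - L) * r / 2)).
  destruct (Nat.eq_dec (s mod n) 0) as [Hs0|Hs0].
  - exfalso.
    assert (Hnear : d (iter n f p) (iter (n + s) f z) < (1 - L) * r / 2).
    { rewrite iter_add. apply Hcont_n. rewrite dist_sym. lra. }
    specialize (Hz (n + s)%nat).
    replace (n + s)%nat with (s + 1 * n)%nat in Hz, Hnear by lia.
    cbv beta in Hz. rewrite Nat.Div0.mod_add, Hs0 in Hz. change (iter 0 f p) with p in Hz.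
    pose proof (dist_triangle (iter n f p) (iter (s + 1 * n) f z) p) as Htri.
    fold r in Htri. nra.
  - exists (s mod n)%nat. repeat split; [lia | apply Nat.mod_upper_bound; lia |].
    specialize (Hz s).
    pose proof (dist_triangle (iter (s mod n) f p) (iter s f z) p).
    rewrite dist_sym in Hz. nra.
Qed.

Lemma periodic_of_return n p :
  metric_continuous d f -> (1 <= n)%nat -> d (iter n f p) p <= rho ->
  exists N, (1 <= N)%nat /\ iter N f p = p.
Proof.
  intros Hcont. induction n as [n IH] using (well_founded_induction lt_wf).
  intros Hn Hr.
  destruct (Req_dec (d (iter n f p) p) 0) as [Hper|Hper].
  - exists n. split; [exact Hn|]. now apply dist_eq0.
  - pose proof (dist_ge0 (iter n f p) p).
    destruct (return_closer n p Hcont Hn ltac:(lra)) as [j [Hj [Hjn Hjp]]].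
    apply (IH j Hjn Hj). lra.
Qed.

Lemma ball_in_periodic_orbit x :
  metric_continuous d f -> exists l : list X, forall y, d x y < rho -> In y l.
Proof.
  intros Hcont.
  assert (Hrho : 0 < rho) by (unfold rho; lra).
  destruct (recurrent_return x rho 0 (Hrec x) Hrho) as [n [_ [Hn Hnx]]].
  destruct (periodic_of_return n x Hcont Hn ltac:(lra)) as [N [HN Hper]].
  exists (map (fun i => iter i f x) (seq 0 N)).
  intros y Hy. apply In_of_approx. intros eta Heta.
  destruct (in_orbit_closure_of_close y x Hy eta Heta) as [s Hs].
  exists (iter s f x). split; [now apply In_periodic_orbit | exact Hs].
Qed.

End ContractiveShadowing.

End Dynamics.

Theorem lemma2p1 (X : Type) (d : X -> X -> R) (f : X -> X) :
  is_metric d ->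
  metric_compact d ->
  metric_continuous d f ->
  (forall x, recurrent d f x) ->
  contractive_shadowing d f ->
  finite_type X.
Proof.
  intros Hd Hcomp Hcont Hrec [L [delta0 [HL0 [HL1 [Hdelta0 Hshadow]]]]].
  apply (finite_of_compact_locally_finite X d Hd (delta0 / 2) Hcomp); [lra|].
  intro x.
  exact (ball_in_periodic_orbit X d f Hd Hrec L delta0 HL0 HL1 Hdelta0 Hshadow x Hcont).
Qed.
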